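(* Let $P$ be a finite poset and $q$ a positive integer. For every $f\in\mathrm{Inc}^q(P)$, $\mathrm{IncPro}(f)=\mathrm{JdtPro}(f)$.
   Context: $\mathrm{Inc}^q(P)$ is the set of $f:P\to\{1,\dots,q\}$ with $p_1<p_2\Rightarrow f(p_1)<f(p_2)$. For $1\le i\le q-1$, $\rho_i(f)(x)=i+1$ if $f(x)=i$ and changing only the value at $x$ to $i+1$ yields an element of $\mathrm{Inc}^q(P)$; $\rho_i(f)(x)=i$ if $f(x)=i+1$ and changing only the value at $x$ to $i$ yields an element of $\mathrm{Inc}^q(P)$; $\rho_i(f)(x)=f(x)$ otherwise. $\mathrm{IncPro}=\rho_{q-1}\circ\cdots\circ\rho_1$. Jeu de taquin promotion: consider labelings $g:P\to\mathbb{Z}\cup\{\square\}$. The slide $\sigma_i$ is defined (simultaneously at all $x$, using the values of $g$) by $\sigma_i(g)(x)=i$ if $g(x)=\square$ and $g(y)=i$ for some $y\gtrdot x$; $\sigma_i(g)(x)=\square$ if $g(x)=i$ and $g(z)=\square$ for some $z\lessdot x$; $\sigma_i(g)(x)=g(x)$ otherwise. $\sigma_{a\to b}$ replaces every label $a$ by $b$. Set $jdt(f)=\sigma_{\square\to q+1}\circ\sigma_q\circ\sigma_{q-1}\circ\cdots\circ\sigma_2\circ\sigma_{1\to\square}(f)$ and $\mathrm{JdtPro}(f)(x)=jdt(f)(x)-1$. *)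

From mathcomp Require Import all_boot all_order all_algebra.
Set Implicit Arguments. Unset Strict Implicit. Unset Printing Implicit Defensive.
Import Order.TTheory GRing.Theory Num.Theory.

Section Promotion.
Context {d : Order.disp_t} {P : finPOrderType d}.
Local Open Scope order_scope.

Definition covers (x y : P) : bool :=
  (x < y) && [forall z : P, ~~ ((x < z) && (z < y))].

Definition isInc (q : nat) (f : P -> nat) : bool :=
  [forall x : P, (1 <= f x <= q)%N] &&
  [forall p1 : P, forall p2 : P, (p1 < p2) ==> (f p1 < f p2)%N].

Definition upd (f : P -> nat) (x : P) (v : nat) : P -> nat :=
  fun y => if y == x then v else f y.

Definition rho (q i : nat) (f : P -> nat) : P -> nat :=
  fun x =>
    if (f x == i) && isInc q (upd f x i.+1) then i.+1
    else if (f x == i.+1) && isInc q (upd f x i) then i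
    else f x.

(* IncPro = rho_{q-1} o ... o rho_1  (rho_1 applied first) *)
Definition IncPro (q : nat) (f : P -> nat) : P -> nat :=
  foldl (fun g i => rho q i g) f (iota 1 q.-1).

(* labelings P -> Z ∪ {□}, with None standing for □ *)
Definition labeling := P -> option int.

(* the slide sigma_i, computed simultaneously from g *)
Definition sigma (i : int) (g : labeling) : labeling :=
  fun x =>
    if (g x == None) && [exists y : P, covers x y && (g y == Some i)] then Some i
    else if (g x == Some i) && [exists z : P, covers z x && (g z == None)] then None
    else g x.

Definition sigma_repl (a b : option int) (g : labeling) : labeling :=
  fun x => if g x == a then b else g x.

Definition jdt (q : nat) (f : P -> nat) : labeling :=
  let g0 : labeling := fun x => Some (Posz (f x)) in
  let g1 := sigma_repl (Some (Posz 1)) None g0 in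
  let g2 := foldl (fun g i => sigma (Posz i) g) g1 (iota 2 q.-1) in
  sigma_repl None (Some (Posz q.+1)) g2.

(* JdtPro(f)(x) = jdt(f)(x) - 1 ; kept as an option so that the
   statement also asserts that jdt(f)(x) is a genuine integer label *)
Definition JdtPro (q : nat) (f : P -> nat) : P -> option int :=
  fun x => omap (fun n : int => (n - 1)%R) (jdt q f x).

End Promotion.

From mathcomp Require Import all_boot all_order all_algebra.
From mathcomp Require Import zify.
Set Implicit Arguments. Unset Strict Implicit. Unset Printing Implicit Defensive.
Import Order.TTheory.

(* Both promotions proceed value by value, and the toggle rho_i is local: for
   f x = i, raising the value at x to i+1 keeps f increasing iff no element
   covering x has value i+1, since below any y > x there is a cover of x whose
   value is squeezed between i and f y; dually for lowering i+1 to i.  These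
   are exactly the conditions under which the slide sigma_(i+1) moves the
   hole.  So after the slides up to sigma_(i+1), the labeling of jdt is read
   off rho_i o ... o rho_1 f: entries of value i+1 form the hole and entries
   of smaller value carry their value plus one.  Filling the hole with q+1
   and subtracting 1 everywhere then gives IncPro f. *)

Section Promotion.
Context {d : Order.disp_t} {P : finPOrderType d}.
Local Open Scope order_scope.
Implicit Types (x y z : P) (h : P -> nat).

Lemma isIncP q h :
  reflect ((forall x, (1 <= h x <= q)%N) /\ {homo h : x y / x < y >-> (x < y)%N})
          (isInc q h).
Proof.
apply: (iffP andP) => [[/forallP bnd /forallP mon]|[bnd mon]]; split => //.
- by move=> x y; move/forallP: (mon x) => /(_ y) /implyP.
- exact/forallP.
- by apply/forallP => x; apply/forallP => y; apply/implyP/mon.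
Qed.

Definition card_below x : nat := #|[set v | v < x]|.

Lemma card_below_lt x y : x < y -> (card_below x < card_below y)%N.
Proof.
move=> lxy; apply/proper_card/properP; split.
- by apply/subsetP => v; rewrite !inE => /lt_trans; apply.
- by exists x; rewrite !inE ?lxy ?ltxx.
Qed.

Lemma exists_covers_above x y : x < y -> exists2 y', covers x y' & y' <= y.
Proof.
move=> lxy; have Pxy : (x < y) && (y <= y) by rewrite lxy lexx.
case: (@arg_minnP _ y (fun w => (x < w) && (w <= y)) card_below Pxy)
  => w /andP[lxw lwy] wmin.
exists w => //; rewrite /covers lxw; apply/forallP => z; apply/negP => /andP[lxz lzw].
have := wmin z; rewrite lxz (ltW (lt_le_trans lzw lwy)) => /(_ isT).
by apply/negP; rewrite -ltnNge; exact: card_below_lt.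
Qed.

Lemma exists_covers_below x y : x < y -> exists2 x', covers x' y & x <= x'.
Proof.
move=> lxy; have Pxy : (x <= x) && (x < y) by rewrite lxy lexx.
case: (@arg_maxnP _ x (fun w => (x <= w) && (w < y)) card_below Pxy)
  => w /andP[lxw lwy] wmax.
exists w => //; rewrite /covers lwy; apply/forallP => z; apply/negP => /andP[lwz lzy].
have := wmax z; rewrite lzy (ltW (le_lt_trans lxw lwz)) => /(_ isT).
by apply/negP; rewrite -ltnNge; exact: card_below_lt.
Qed.

Section CoverGaps.
Variable h : P -> nat.
Hypothesis h_mono : {homo h : x y / x < y >-> (x < y)%N}.

Lemma covers_gap_above i x : h x = i ->
  ~~ [exists y, covers x y && (h y == i.+1)] -> forall y, x < y -> (i.+1 < h y)%N.
Proof.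
move=> hx /existsPn nocov y lxy; rewrite ltn_neqAle -hx h_mono // andbT.
apply/eqP => hy; have [y' cxy' ley'] := exists_covers_above lxy.
have := nocov y'; rewrite cxy' /= => /eqP; apply.
have := h_mono (proj1 (andP cxy')); have := ltW_homo h_mono ley'; lia.
Qed.

Lemma covers_gap_below i x : h x = i.+1 ->
  ~~ [exists z, covers z x && (h z == i)] -> forall z, z < x -> (h z < i)%N.
Proof.
move=> hx /existsPn nocov z lzx; rewrite ltn_neqAle -ltnS -hx h_mono // andbT.
apply/eqP => hz; have [z' cz'x lez'] := exists_covers_below lzx.
have := nocov z'; rewrite cz'x /= => /eqP; apply.
have := h_mono (proj1 (andP cz'x)); have := ltW_homo h_mono lez'; lia.
Qed.

End CoverGaps.

Section Toggle.
Variables (q i : nat) (h : P -> nat).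
Hypotheses (h_inc : isInc q h) (i_range : (1 <= i < q)%N).

Lemma isInc_upd_succ x : h x = i ->
  reflect (forall y, x < y -> (i.+1 < h y)%N) (isInc q (upd h x i.+1)).
Proof.
have /isIncP[bnd mon] := h_inc; move=> hx; apply: (iffP (isIncP q _)).
  by case=> _ mon' y lxy; have := mon' _ _ lxy; rewrite /upd eqxx gt_eqF.
move=> above; split=> [y|y z lyz]; rewrite /upd.
  by case: eqP => _; [lia | exact: bnd].
case: (eqVneq y x) => [eyx|nyx]; case: (eqVneq z x) => [ezx|nzx].
- by move: lyz; rewrite eyx ezx ltxx.
- by apply: above; rewrite -eyx.
- by have := mon _ _ lyz; rewrite ezx hx; lia.
- exact: mon.
Qed.

Lemma isInc_upd_pred x : h x = i.+1 ->
  reflect (forall z, z < x -> (h z < i)%N) (isInc q (upd h x i)).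
Proof.
have /isIncP[bnd mon] := h_inc; move=> hx; apply: (iffP (isIncP q _)).
  by case=> _ mon' z lzx; have := mon' _ _ lzx; rewrite /upd eqxx lt_eqF.
move=> below; split=> [y|y z lyz]; rewrite /upd.
  by case: eqP => [_|_]; [have := bnd x; lia | exact: bnd].
case: (eqVneq y x) => [eyx|nyx]; case: (eqVneq z x) => [ezx|nzx].
- by move: lyz; rewrite eyx ezx ltxx.
- by have := mon _ _ lyz; rewrite eyx hx; lia.
- by rewrite -ezx in below; exact: below.
- exact: mon.
Qed.

Lemma isInc_upd_succE x : h x = i ->
  isInc q (upd h x i.+1) = ~~ [exists y, covers x y && (h y == i.+1)].
Proof.
have /isIncP[_ mon] := h_inc; move=> hx.
apply/(isInc_upd_succ hx)/idP => [above|]; last exact: covers_gap_above.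
apply/existsPn => y; apply/negP => /andP[/andP[lxy _] /eqP hy].
by have := above y lxy; rewrite hy ltnn.
Qed.

Lemma isInc_upd_predE x : h x = i.+1 ->
  isInc q (upd h x i) = ~~ [exists z, covers z x && (h z == i)].
Proof.
have /isIncP[_ mon] := h_inc; move=> hx.
apply/(isInc_upd_pred hx)/idP => [below|]; last exact: covers_gap_below.
apply/existsPn => z; apply/negP => /andP[/andP[lzx _] /eqP hz].
by have := below z lzx; rewrite hz ltnn.
Qed.

Lemma rho_covers x :
  rho q i h x =
    if (h x == i) && ~~ [exists y, covers x y && (h y == i.+1)] then i.+1
    else if (h x == i.+1) && ~~ [exists z, covers z x && (h z == i)] then i
    else h x.
Proof.
rewrite /rho; have [hx|_] /= := eqVneq (h x) i.
  by rewrite isInc_upd_succE // hx (ltn_eqF (ltnSn i)).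
by have [hx|_] //= := eqVneq (h x) i.+1; rewrite isInc_upd_predE.
Qed.

Lemma rho_cases x :
  [\/ rho q i h x = h x,
      [/\ h x = i, rho q i h x = i.+1 & forall y, x < y -> (i.+1 < h y)%N] |
      [/\ h x = i.+1, rho q i h x = i & forall z, z < x -> (h z < i)%N]].
Proof.
rewrite /rho; case: ifP => [/andP[/eqP hx /(isInc_upd_succ hx) above]|_].
  by constructor 2.
case: ifP => [/andP[/eqP hx /(isInc_upd_pred hx) below]|_].
  by constructor 3.
by constructor 1.
Qed.

Lemma rho_inc : isInc q (rho q i h).
Proof.
have /isIncP[bnd mon] := h_inc; apply/isIncP; split=> [x|x y lxy].
  by have := bnd x; case: (rho_cases x) => [->|[_ -> _]|[_ -> _]]; lia.
have := mon _ _ lxy.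
case: (rho_cases x) => [->|[? -> /(_ y lxy) ?]|[? -> _]];
case: (rho_cases y) => [->|[? -> _]|[? -> /(_ x lxy) ?]]; lia.
Qed.

End Toggle.

(* The label jdt gives, while the hole carries the value i, to an entry whose
   partially toggled value is v: entries below i have already slid, and are
   labeled one above their final value. *)
Definition jdt_label (i v : nat) : option int :=
  if v == i then None else if (v < i)%N then Some (Posz v.+1) else Some (Posz v).

Lemma jdt_label_eqNone i v : (jdt_label i v == None) = (v == i).
Proof. by rewrite /jdt_label; case: (v =P i) => // _; case: ifP. Qed.

Lemma jdt_label_eqSome i v : (jdt_label i v == Some (Posz i.+1)) = (v == i.+1).
Proof.
rewrite /jdt_label; case: (v =P i) => [->|ne]; first by rewrite (ltn_eqF (ltnSn i)).
by case: ifP => lt; rewrite (inj_eq Some_inj) eqz_nat; lia.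
Qed.

Lemma jdt_label_hole i : jdt_label i i = None.
Proof. by rewrite /jdt_label eqxx. Qed.

Lemma jdt_label_succ i : jdt_label i i.+1 = Some (Posz i.+1).
Proof. by rewrite /jdt_label (gtn_eqF (ltnSn i)) ltnNge leqnSn. Qed.

Lemma jdt_label_pred i : jdt_label i.+1 i = Some (Posz i.+1).
Proof. by rewrite /jdt_label (ltn_eqF (ltnSn i)) ltnSn. Qed.

Lemma jdt_label_shift i v : v != i -> v != i.+1 -> jdt_label i.+1 v = jdt_label i v.
Proof.
by move=> /negPf vi /negPf vi1; rewrite /jdt_label vi vi1 ltnS leq_eqVlt vi.
Qed.

Lemma sigma_rho q i h (g : labeling) : isInc q h -> (1 <= i < q)%N ->
  (forall x, g x = jdt_label i (h x)) ->
  forall x, sigma (Posz i.+1) g x = jdt_label i.+1 (rho q i h x).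
Proof.
move=> h_inc i_range gE x; rewrite rho_covers // /sigma !gE.
under [X in (_ == None) && X]eq_existsb => y do rewrite gE jdt_label_eqSome.
under [X in (_ == Some _) && X]eq_existsb => z do rewrite gE jdt_label_eqNone.
rewrite jdt_label_eqNone jdt_label_eqSome.
have [hx|nx] := eqVneq (h x) i.
  rewrite hx (ltn_eqF (ltnSn i)) /=.
  by case: [exists y, _ && (h y == i.+1)]; rewrite ?jdt_label_pred ?jdt_label_hole.
have [hx|nx1] := eqVneq (h x) i.+1.
  rewrite hx /=.
  by case: [exists z, _ && (h z == i)];
    rewrite ?jdt_label_pred ?jdt_label_succ ?jdt_label_hole.
by rewrite jdt_label_shift.
Qed.

Lemma iota_rcons m n : iota m n.+1 = rcons (iota m n) (m + n).
Proof. by rewrite -addn1 iotaD cats1. Qed.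

Definition IncPro_upto (q n : nat) (f : P -> nat) : P -> nat :=
  foldl (fun g i => rho q i g) f (iota 1 n).

Definition jdt_upto (n : nat) (f : P -> nat) : labeling :=
  foldl (fun g i => sigma (Posz i) g)
    (sigma_repl (Some (Posz 1)) None (fun x => Some (Posz (f x)))) (iota 2 n).

Lemma IncPro_upto_inc q n f : isInc q f -> (n < q)%N -> isInc q (IncPro_upto q n f).
Proof.
move=> f_inc; elim: n => [//|n IH] ltnq.
rewrite /IncPro_upto iota_rcons foldl_rcons; apply: rho_inc; last lia.
exact: IH (ltnW ltnq).
Qed.

Lemma jdt_uptoE q n f : isInc q f -> (n < q)%N ->
  forall x, jdt_upto n f x = jdt_label n.+1 (IncPro_upto q n f x).
Proof.
move=> f_inc; elim: n => [|n IH] ltnq x.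
  have /isIncP[bnd _] := f_inc; case/andP: (bnd x) => fx_pos _.
  rewrite /jdt_upto /sigma_repl /= (inj_eq Some_inj) eqz_nat /jdt_label ltnNge fx_pos.
  by case: eqP.
rewrite /jdt_upto /IncPro_upto !iota_rcons !foldl_rcons.
apply: sigma_rho => [||y].
- exact: IncPro_upto_inc (ltnW ltnq).
- lia.
- exact: IH (ltnW ltnq) y.
Qed.

End Promotion.

Theorem theorem3p8 (d : Order.disp_t) (P : finPOrderType d) (q : nat)
  (hq : (0 < q)%N) (f : P -> nat) (hf : isInc q f) :
  forall x : P, JdtPro q f x = Some (Posz (IncPro q f x)).
Proof.
have ltq : (q.-1 < q)%N by rewrite ltn_predL.
move=> x; set v := IncPro q f x.
have /isIncP[bnd _] := IncPro_upto_inc hf ltq; have /andP[_ v_le] := bnd x.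
have jdt_v : jdt_upto q.-1 f x = jdt_label q v by rewrite (jdt_uptoE hf ltq) prednK.
rewrite /JdtPro /jdt /sigma_repl -/(jdt_upto q.-1 f) jdt_v jdt_label_eqNone.
rewrite /jdt_label; case: (v =P q) => [->|ne] /=; first by congr Some; lia.
have -> : (v < q)%N by rewrite ltn_neqAle v_le andbT; apply/eqP.
by congr Some; lia.
Qed.
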